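(* Let $x$ be a stable g-matching with $x\ne x^{\max}$, let $w\in W$, and let $(c,a)$ and $(c',a')$ be disjoint (no common edge) essential $w$-pairs under $x$. Let $z:=x_w+\mathbf 1^a-\mathbf 1^c$ and $z':=x_w+\mathbf 1^{a'}-\mathbf 1^{c'}$. Then: (i) the vectors $z+\mathbf 1^{a'}-\mathbf 1^{c'}$ and $z'+\mathbf 1^a-\mathbf 1^c$ are acceptable for $w$; (ii) no edge $d\in U_F^+(x)$ is interesting for $w$ under $y:=x_w+\mathbf 1^a-\mathbf 1^c+\mathbf 1^{a'}-\mathbf 1^{c'}$; and (iii) the pair $(c',a')$ is essential under $z$, and $(c,a)$ is essential under $z'$ (with $z$, resp. $z'$, in place of $x_w$ in the definitions of legal and essential $w$-pairs).
   Context: Let $G=(V,E)$ be a finite bipartite graph with color classes $W$ and $F$; the edge joining $w\in W$ and $f\in F$ is written $wf$. Let $b\in\mathbb Z_+^E$ be capacities. For $v\in V$, $E_v$ is the set of edges at $v$, $\mathcal B_v=\{z\in\mathbb Z_+^{E_v}: z\le b|_{E_v}\}$, $\mathbf 1^e$ the unit vector of $e$, $|z|=\sum_e|z(e)|$, $\wedge,\vee$ componentwise min/max. Each $v$ has a choice function $C_v:\mathcal B_v\to\mathcal B_v$ with $C_v(z)\le z$ and, for all $z,z'$: (A1) $z\ge z'\ge C_v(z)\Rightarrow C_v(z')=C_v(z)$; (A2) $z\ge z'\Rightarrow C_v(z)\wedge z'\le C_v(z')$; (A3) $z\ge z'\Rightarrow|C_v(z)|\ge|C_v(z')|$. $z$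 is acceptable if $C_v(z)=z$; for distinct acceptable $z,z'$, $z'\prec_v z$ iff $C_v(z\vee z')=z$. $x_v$ = restriction of $x$ to $E_v$. A g-matching is $x\in\mathbb Z_+^E$, $x\le b$, each $x_v$ acceptable; $x\prec_F y$ (distinct) iff $x_f\preceq_f y_f$ for all $f\in F$. $e\in E_v$ is interesting for $v$ under acceptable $z$ if some $z'\in\mathcal B_v$ has $z'(e)>z(e)$, $z'(e')=z(e')$ for $e'\neq e$, $C_v(z')(e)>z(e)$; $e=wf$ is interesting for $v\in\{w,f\}$ under a g-matching $x$ if so under $x_v$, and blocks $x$ if interesting for both endpoints; stable g-matchings (no blocking edge) form a finite lattice under $\prec_F$ with maximum $x^{\max}$. For stable $x$: $U_F^+(x)$ = edges $wf$ interesting for $f$ under $x$; $U_F^-(x)$ = edges $wf$ with $x(wf)>0$ not interesting for $f$ under $x$. For $w\in W$, a legal $w$-pair under $x$ is $(c,a)$ with $c\in U_F^-(x)\cap E_w$, $a\in U_F^+(x)\cap E_w$ and $C_w(x_w+\mathbf 1^a-\mathbf 1^c)=x_w+\mathbf 1^a-\mathbf 1^c$; it is essential if no $d\in(U_F^+(x)\cap E_w)\setminus\{a\}$ is interesting for $w$ under $x_w+\mathbf 1^a-\mathbf 1^c$. *)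

From mathcomp Require Import all_boot.
Set Implicit Arguments. Unset Strict Implicit. Unset Printing Implicit Defensive.

(* A finite bipartite graph: colour classes W, F, edge set E, each edge e
   joins ew e \in W and ef e \in F.
   A vector z \in Z_+^{E_v} is represented by a function E -> nat that
   vanishes outside E_v. *)

Section Defs.
Variables (W F E : finType) (ew : E -> W) (ef : E -> F) (b : E -> nat).
Variable C : W + F -> {ffun E -> nat} -> {ffun E -> nat}.

Definition vec := {ffun E -> nat}.

Definition incident (v : W + F) (e : E) : bool :=
  match v with inl w => ew e == w | inr f => ef e == f end.

Definition inB (v : W + F) (z : vec) : Prop :=
  forall e, z e <= (if incident v e then b e else 0).

Definition vle (z z' : vec) : Prop := forall e, z e <= z' e.
Definition vmin (z z' : vec) : vec := [ffun e => minn (z e) (z' e)].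
Definition vmax (z z' : vec) : vec := [ffun e => maxn (z e) (z' e)].
Definition vnorm (z : vec) : nat := \sum_e z e.

Definition restr (v : W + F) (x : vec) : vec :=
  [ffun e => if incident v e then x e else 0].

Definition swap (z : vec) (a c : E) : vec :=
  [ffun e => z e + (e == a) - (e == c)].

Definition choice_axioms : Prop :=
  forall v,
    (forall z, inB v z -> vle (C v z) z) /\
    (forall z z', inB v z -> inB v z' ->
       vle z' z -> vle (C v z) z' -> C v z' = C v z) /\
    (forall z z', inB v z -> inB v z' ->
       vle z' z -> vle (vmin (C v z) z') (C v z')) /\
    (forall z z', inB v z -> inB v z' ->
       vle z' z -> vnorm (C v z') <= vnorm (C v z)).

Definition acceptable (v : W + F) (z : vec) : Prop := inB v z /\ C v z = z.

Definition prefer (v : W + F) (z' z : vec) : Prop :=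
  acceptable v z /\ acceptable v z' /\ z <> z' /\ C v (vmax z z') = z.

Definition preceq (v : W + F) (z' z : vec) : Prop := z' = z \/ prefer v z' z.

Definition interesting (v : W + F) (z : vec) (e : E) : Prop :=
  incident v e /\
  exists z' : vec, inB v z' /\ z e < z' e /\
    (forall e', e' != e -> z' e' = z e') /\ z e < C v z' e.

Definition gmatching (x : vec) : Prop :=
  (forall e, x e <= b e) /\ forall v, acceptable v (restr v x).

Definition blocks (x : vec) (e : E) : Prop :=
  interesting (inl (ew e)) (restr (inl (ew e)) x) e /\
  interesting (inr (ef e)) (restr (inr (ef e)) x) e.

Definition stable (x : vec) : Prop := gmatching x /\ forall e, ~ blocks x e.

Definition precF (x y : vec) : Prop :=
  x <> y /\ forall f : F, preceq (inr f) (restr (inr f) x) (restr (inr f) y).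

Definition is_xmax (xmax : vec) : Prop :=
  stable xmax /\ forall y, stable y -> y = xmax \/ precF y xmax.

Definition UFplus (x : vec) (e : E) : Prop :=
  interesting (inr (ef e)) (restr (inr (ef e)) x) e.
Definition UFminus (x : vec) (e : E) : Prop := 0 < x e /\ ~ UFplus x e.

(* legal / essential w-pairs (c, a) under x, relative to the vector z
   (z = x_w in the paper's definition; other z for part (iii)) *)
Definition legal (x : vec) (w : W) (z : vec) (c a : E) : Prop :=
  incident (inl w) c /\ incident (inl w) a /\ UFminus x c /\ UFplus x a /\
  acceptable (inl w) (swap z a c).

Definition essential (x : vec) (w : W) (z : vec) (c a : E) : Prop :=
  legal x w z c a /\
  forall d, incident (inl w) d -> UFplus x d -> d != a ->
    ~ interesting (inl w) (swap z a c) d.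

End Defs.

From mathcomp Require Import all_boot zify.

Set Implicit Arguments. Unset Strict Implicit. Unset Printing Implicit Defensive.

(* Write X = x_w, z = X + 1^a - 1^c, z' = X + 1^a' - 1^c' and
   y = z + 1^a' - 1^c' = z' + 1^a - 1^c.  The basic fact is that raising an
   acceptable vector z on edges that are uninteresting under z does not change
   the choice: C_w(z \/ u) = z.  Essentiality of (c, a) makes every edge of
   U_F^+ other than a uninteresting under z, so for any u that agrees with y
   off a single edge d of U_F^+ \ {a}, substitutability gives
   C_w(u) >= z /\ u and size monotonicity gives |C_w(u)| <= |z| = |y|;
   symmetrically with z' when d <> a'.  As y <= z off a' and y <= z' off a,
   taking u = y gives y <= C_w(y), which is (i).  A witness u for d being
   interesting under y would satisfy C_w(u) >= y off d and |C_w(u)| <= |y|,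
   hence C_w(u)(d) <= y(d), which is impossible; this is (ii).  Part (iii)
   restates (i) and (ii). *)

Section Vectors.
Variable E : finType.
Implicit Types (X z p q : {ffun E -> nat}) (a c d e : E).

Lemma swap_le z a c e : e != a -> swap z a c e <= z e.
Proof. by move=> /negbTE ea; rewrite ffunE ea addn0 leq_subr. Qed.

Lemma vnorm_swap z a c : a != c -> 0 < z c -> vnorm (swap z a c) = vnorm z.
Proof.
move=> ac zc; rewrite /vnorm (bigD1 c) // [RHS](bigD1 c) //=.
rewrite (bigD1 a) //= [X in _ = _ + X](bigD1 a) //=.
rewrite (eq_bigr (fun e => z e)) => [|e /andP[/negbTE ec /negbTE ea]].
  by rewrite !ffunE eqxx (negbTE ac) eq_sym (negbTE ac) eqxx; lia.
by rewrite ffunE ec ea addn0 subn0.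
Qed.

Lemma swapC X a c a' c' : c != c' -> 0 < X c -> 0 < X c' ->
  swap (swap X a c) a' c' = swap (swap X a' c') a c.
Proof.
move=> cc' Xc Xc'; apply/ffunP => e; rewrite !ffunE.
case: (eqVneq e c) => [->|ec]; first by rewrite (negbTE cc'); lia.
by case: (eqVneq e c') => [->|ec']; lia.
Qed.

Lemma le_at_of_vnorm_le p q d :
  (forall e, e != d -> q e <= p e) -> vnorm p <= vnorm q -> p d <= q d.
Proof.
move=> qp; rewrite /vnorm (bigD1 d) // [X in _ <= X](bigD1 d) //=.
have : \sum_(e | e != d) q e <= \sum_(e | e != d) p e by apply: leq_sum.
lia.
Qed.

End Vectors.

Section ChoiceFunction.
Variables (W F E : finType) (ew : E -> W) (ef : E -> F) (b : E -> nat).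
Variable C : W + F -> {ffun E -> nat} -> {ffun E -> nat}.
Hypothesis HC : choice_axioms ew ef b C.
Variable v : W + F.

Local Notation inB := (inB ew ef b v).
Local Notation acceptable := (acceptable ew ef b C v).
Local Notation interesting := (interesting ew ef b C v).
Implicit Types (z y u M : {ffun E -> nat}) (d e : E).

Lemma choice_le z : inB z -> vle (C v z) z.
Proof. exact: (HC v).1. Qed.

Lemma choice_irrelevance z M :
  inB M -> inB z -> vle z M -> vle (C v M) z -> C v z = C v M.
Proof. exact: (HC v).2.1. Qed.

Lemma choice_substitutable M u :
  inB M -> inB u -> vle u M -> vle (vmin (C v M) u) (C v u).
Proof. exact: (HC v).2.2.1. Qed.

Lemma choice_size_monotone M u :
  inB M -> inB u -> vle u M -> vnorm (C v u) <= vnorm (C v M).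
Proof. exact: (HC v).2.2.2. Qed.

Lemma inB_le M u : inB M -> vle u M -> inB u.
Proof. by move=> MB uM e; exact: leq_trans (uM e) (MB e). Qed.

Lemma inB_vmax z u : inB z -> inB u -> inB (vmax z u).
Proof. by move=> zB uB e; rewrite ffunE geq_max zB uB. Qed.

Lemma incident_of_pos u e : inB u -> 0 < u e -> incident ew ef v e.
Proof. by move=> uB; apply: contraTT => /negbTE ve; have := uB e; rewrite ve leqn0 -eqn0Ngt. Qed.

Lemma acceptable_of_le_choice u : inB u -> vle u (C v u) -> acceptable u.
Proof.
move=> uB uC; split=> //; apply/ffunP => e.
by apply/eqP; rewrite eqn_leq choice_le ?uC.
Qed.

Lemma choice_raise1 z u d : acceptable z -> ~ interesting z d -> inB u ->
  z d < u d -> (forall e, e != d -> u e = z e) -> C v u = z.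
Proof.
move=> [zB Cz] zd uB zu uz.
have zle : vle z u by move=> e; case: (eqVneq e d) => [->|/uz->]; [exact: ltnW|].
suff Cle : vle (C v u) z by rewrite -(choice_irrelevance uB zB zle Cle) Cz.
move=> e; case: (eqVneq e d) => [->|ed]; last by rewrite -(uz e ed) choice_le.
rewrite leqNgt; apply/negP => zC; apply: zd; split.
  by apply: incident_of_pos uB _; exact: leq_ltn_trans zu.
by exists u.
Qed.

Lemma choice_raise_uninteresting z M : acceptable z -> inB M -> vle z M ->
  (forall e, z e < M e -> ~ interesting z e) -> C v M = z.
Proof.
move=> zA MB zM unint.
suff CM : vle (C v M) z by rewrite -(choice_irrelevance MB zA.1 zM CM) zA.2.
move=> e; case: (ltnP (z e) (M e)) => [zMe|Mz]; last exact: leq_trans (choice_le MB e) Mz.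
pose r := [ffun e' => if e' == e then M e else z e'].
have rM : vle r M by move=> e'; rewrite ffunE; case: eqP => [->|_].
have rB := inB_le MB rM.
have Cr : C v r = z.
  apply: choice_raise1 zA (unint e zMe) rB _ _; first by rewrite ffunE eqxx.
  by move=> e' /negbTE e'e; rewrite ffunE e'e.
have := choice_substitutable MB rB rM e.
by rewrite Cr !ffunE eqxx (minn_idPl (choice_le MB e)).
Qed.

Lemma choice_ge_min z u : acceptable z -> inB u ->
  (forall e, z e < u e -> ~ interesting z e) ->
  (forall e, minn (z e) (u e) <= C v u e) /\ vnorm (C v u) <= vnorm z.
Proof.
move=> zA uB unint.
have MB := inB_vmax zA.1 uB.
have uM : vle u (vmax z u) by move=> e; rewrite ffunE leq_maxr.
have CM : C v (vmax z u) = z.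
  apply: choice_raise_uninteresting => // e; rewrite ffunE ?leq_maxl //.
  by rewrite leq_max ltnn; exact: unint.
split; last by rewrite -CM; exact: choice_size_monotone.
by move=> e; have := choice_substitutable MB uB uM e; rewrite CM ffunE.
Qed.

Lemma le_choice_outside2 (Q : E -> Prop) z y u a' d : acceptable z ->
  (forall e, Q e -> ~ interesting z e) -> Q a' -> Q d ->
  (forall e, e != a' -> y e <= z e) ->
  inB u -> (forall e, e != d -> u e = y e) ->
  (forall e, e != d -> e != a' -> y e <= C v u e) /\ vnorm (C v u) <= vnorm z.
Proof.
move=> zA Qunint Qa' Qd yz uB uy.
have unint : forall e, z e < u e -> ~ interesting z e.
  move=> e; case: (eqVneq e d) => [-> _|ed]; first exact: Qunint.
  case: (eqVneq e a') => [-> _|ea']; first exact: Qunint.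
  by rewrite uy // ltnNge yz.
have [ge_min vn] := choice_ge_min zA uB unint.
by split=> // e ed ea'; have := ge_min e; rewrite uy // (minn_idPr (yz e ea')).
Qed.

Section Exchange.
Variable P : E -> Prop.
Variables (X : {ffun E -> nat}) (a c a' c' : E).
Hypotheses (Hz : acceptable (swap X a c)) (Hz' : acceptable (swap X a' c')).
Hypothesis Hunint : forall e, P e -> e != a -> ~ interesting (swap X a c) e.
Hypothesis Hunint' : forall e, P e -> e != a' -> ~ interesting (swap X a' c') e.
Hypotheses (Pa : P a) (Pa' : P a').
Hypotheses (Haa' : a != a') (Hac : a != c) (Hac' : a' != c') (Hcc' : c != c').
Hypotheses (HXc : 0 < X c) (HXc' : 0 < X c').

Local Notation z := (swap X a c).
Local Notation z' := (swap X a' c').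
Local Notation y := (swap z a' c').

Lemma exchangeC : swap z' a c = y.
Proof. by rewrite swapC 1?eq_sym. Qed.

Lemma vnorm_exchange : vnorm z = vnorm y /\ vnorm z' = vnorm y.
Proof.
have vnz : vnorm z = vnorm X by apply: vnorm_swap.
have vnz' : vnorm z' = vnorm X by apply: vnorm_swap.
have zc' : 0 < z c' by rewrite ffunE [c' == c]eq_sym (negbTE Hcc') subn0 ltn_addr.
by rewrite (vnorm_swap Hac' zc') vnz vnz'.
Qed.

Lemma inB_exchange : inB y.
Proof.
move=> e; case: (eqVneq e a') => [->|ea']; last exact: leq_trans (swap_le _ _ ea') (Hz.1 e).
by rewrite -exchangeC; apply: leq_trans (swap_le _ _ _) (Hz'.1 a'); rewrite eq_sym.
Qed.

Lemma exchange_le_choice u d : inB u -> (forall e, e != d -> u e = y e) -> P d ->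
  (forall e, e != d -> y e <= C v u e) /\ vnorm (C v u) <= vnorm y.
Proof.
move=> uB uy Pd.
have side : d != a ->
    (forall e, e != d -> e != a' -> y e <= C v u e) /\ vnorm (C v u) <= vnorm y.
  move=> da; rewrite -vnorm_exchange.1.
  apply: (le_choice_outside2 (Q := fun e => P e /\ e != a)) uB uy => //.
  - by move=> e []; exact: Hunint.
  - by rewrite eq_sym.
  - by move=> e; exact: swap_le.
have side' : d != a' ->
    (forall e, e != d -> e != a -> y e <= C v u e) /\ vnorm (C v u) <= vnorm y.
  move=> da'; rewrite -vnorm_exchange.2 -exchangeC.
  rewrite -exchangeC in uy.
  apply: (le_choice_outside2 (Q := fun e => P e /\ e != a')) uB uy => //.
  - by move=> e []; exact: Hunint'.
  - by move=> e; exact: swap_le.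
case: (eqVneq d a) => [da|da].
  have da' : d != a' by rewrite da.
  have [le' vn] := side' da'.
  by split=> // e ed; apply: le' => //; rewrite -da.
have [le vn] := side da; split=> // e ed.
case: (eqVneq e a') => [ea'|]; last exact: le.
have da' : d != a' by rewrite -ea' eq_sym.
by apply: (side' da').1 => //; rewrite ea' eq_sym.
Qed.

Lemma exchange_acceptable : acceptable y.
Proof.
apply: acceptable_of_le_choice inB_exchange _ => e.
case: (eqVneq e a) => [->|ea].
  by apply: (exchange_le_choice (d := a') inB_exchange _ Pa').1.
exact: (exchange_le_choice (d := a) inB_exchange _ Pa).1.
Qed.

Lemma exchange_uninteresting d : P d -> ~ interesting y d.
Proof.
move=> Pd [_ [u [uB [_ [uy yC]]]]].
have [le vn] := exchange_le_choice uB uy Pd.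
by have := le_at_of_vnorm_le le vn; rewrite leqNgt yC.
Qed.

End Exchange.
End ChoiceFunction.

Theorem lemma3p7 (W F E : finType) (ew : E -> W) (ef : E -> F)
  (Hsimple : injective (fun e => (ew e, ef e)))
  (b : E -> nat) (C : W + F -> {ffun E -> nat} -> {ffun E -> nat})
  (HC : choice_axioms ew ef b C)
  (x xmax : {ffun E -> nat})
  (Hx : stable ew ef b C x) (Hxmax : is_xmax ew ef b C xmax) (Hne : x <> xmax)
  (w : W) (c a c' a' : E)
  (Hess : essential ew ef b C x w (restr ew ef (inl w) x) c a)
  (Hess' : essential ew ef b C x w (restr ew ef (inl w) x) c' a')
  (Hdisj : [/\ c != c', c != a', a != c' & a != a']) :
  [/\ acceptable ew ef b C (inl w)
        (swap (swap (restr ew ef (inl w) x) a c) a' c'),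
      acceptable ew ef b C (inl w)
        (swap (swap (restr ew ef (inl w) x) a' c') a c),
      (forall d, UFplus ew ef b C x d ->
         ~ interesting ew ef b C (inl w)
             (swap (swap (restr ew ef (inl w) x) a c) a' c') d),
      essential ew ef b C x w (swap (restr ew ef (inl w) x) a c) c' a'
    & essential ew ef b C x w (swap (restr ew ef (inl w) x) a' c') c a].
Proof.
move: Hess Hess' Hdisj => [[Hic [Hia [[Hxc HnUc] [HUa Hz]]]] Hunint].
move=> [[Hic' [Hia' [[Hxc' HnUc'] [HUa' Hz']]]] Hunint'] [Hcc' _ _ Haa'].
set X := restr ew ef (inl w) x in Hz Hz' Hunint Hunint' *.
pose P d := incident ew ef (inl w) d /\ UFplus ew ef b C x d.
have HXc : 0 < X c by rewrite ffunE Hic.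
have HXc' : 0 < X c' by rewrite ffunE Hic'.
have Hac : a != c by apply: contraPneq HnUc => <-.
have Hac' : a' != c' by apply: contraPneq HnUc' => <-.
have HunintP : forall e, P e -> e != a -> ~ interesting ew ef b C (inl w) (swap X a c) e.
  by move=> e []; exact: Hunint.
have HunintP' : forall e, P e -> e != a' -> ~ interesting ew ef b C (inl w) (swap X a' c') e.
  by move=> e []; exact: Hunint'.
have Hy := exchange_acceptable HC Hz Hz' HunintP HunintP' (conj Hia HUa) (conj Hia' HUa')
  Haa' Hac Hac' Hcc' HXc HXc'.
have HyP := exchange_uninteresting HC Hz Hz' HunintP HunintP' (conj Hia HUa) (conj Hia' HUa')
  Haa' Hac Hac' Hcc' HXc HXc'.
have Hii : forall d, UFplus ew ef b C x d ->
    ~ interesting ew ef b C (inl w) (swap (swap X a c) a' c') d.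
  by move=> d HUd Hd; exact: HyP (conj Hd.1 HUd) Hd.
have yC := exchangeC a a' Hcc' HXc HXc'.
split; rewrite ?yC //.
- by split; [do 4 (split=> //) | move=> d _ HUd _; exact: Hii].
- by split; [do 4 (split=> //); rewrite yC | move=> d _ HUd _; rewrite yC; exact: Hii].
Qed.
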